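(* Let $M\in\mathbb{N}$, $M\ge2$, and let $r$ be a strong solution of the BVP. Then $d(0):=\lim_{R\to0}d(R)=0$, and exactly one of the following occurs: (i) $r$ is a delayed lift-off function, i.e. there exists $0<\delta<1$ with $r\equiv0$ on $[0,\delta]$; in this case $r\in C^\infty([0,1])$; (ii) $r$ lifts off immediately, i.e. $r>0$ and $\dot r>0$ on $(0,1]$; in this case $r\in C^1([0,1])$ and $\dot r(0)=0$.
   Context: Fix constants $\gamma>0$, $s_0\ge0$, $\kappa\ge-\gamma s_0$ and a convex function $\rho\in C^\infty(\mathbb{R})$ with $\rho(s)=0$ for $s\le0$, $\rho(s)=\gamma s+\kappa$ for $s\ge s_0$, and $\rho=\rho_1$ on $[0,s_0]$ where $\rho_1$ is smooth and convex with $\rho_1(0)=0$, $\rho_1(s_0)=\gamma s_0+\kappa$. For $M\in\mathbb{N}\setminus\{0\}$ and a function $r$ on $(0,1]$ let $d(R)=\frac{Mr(R)\dot r(R)}{R}$ and $Lr(R)=\frac{M^2r}{R}-\dot r-R\ddot r$. A strong solution of the BVP is a function $r\in C([0,1])\cap C^\infty((0,1])$ with $Lr=M\rho''(d)\dot d\,r$ on $(0,1)$, $r(0)=0$ and $r(1)=1$. *)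

From Stdlib Require Import Reals.
From Coquelicot Require Import Coquelicot.
Open Scope R_scope.

Definition cont_within (D : R -> Prop) (f : R -> R) (x : R) : Prop :=
  forall eps, 0 < eps -> exists delta, 0 < delta /\
    forall y, D y -> Rabs (y - x) < delta -> Rabs (f y - f x) < eps.

Definition deriv_within (D : R -> Prop) (f : R -> R) (l x : R) : Prop :=
  forall eps, 0 < eps -> exists delta, 0 < delta /\
    forall y, D y -> Rabs (y - x) < delta ->
      Rabs (f y - f x - l * (y - x)) <= eps * Rabs (y - x).

(* f is C^infinity on D (derivatives of all orders exist relative to D,
   hence are continuous on D). *)
Definition smooth_on (D : R -> Prop) (f : R -> R) : Prop :=
  exists F : nat -> R -> R,
    (forall x, D x -> F O x = f x) /\
    (forall n x, D x -> deriv_within D (F n) (F (S n) x) x).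

Definition C1_on_with (D : R -> Prop) (f f' : R -> R) : Prop :=
  (forall x, D x -> deriv_within D f (f' x) x) /\
  (forall x, D x -> cont_within D f' x).

Definition Icc01 (x : R) : Prop := 0 <= x <= 1.
Definition Ioc01 (x : R) : Prop := 0 < x <= 1.

Definition dfun (M : nat) (r : R -> R) (x : R) : R :=
  INR M * r x * Derive r x / x.

Definition Lop (M : nat) (r : R -> R) (x : R) : R :=
  INR M ^ 2 * r x / x - Derive r x - x * Derive_n r 2 x.

Definition convex_fun (f : R -> R) : Prop :=
  forall x y t, 0 <= t <= 1 -> f (t * x + (1 - t) * y) <= t * f x + (1 - t) * f y.

Definition rho_hyp (gamma s0 kappa : R) (rho : R -> R) : Prop :=
  0 < gamma /\ 0 <= s0 /\ - gamma * s0 <= kappa /\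
  smooth_on (fun _ => True) rho /\ convex_fun rho /\
  (forall s, s <= 0 -> rho s = 0) /\
  (forall s, s0 <= s -> rho s = gamma * s + kappa) /\
  (exists rho1 : R -> R, smooth_on (fun _ => True) rho1 /\ convex_fun rho1 /\
     rho1 0 = 0 /\ rho1 s0 = gamma * s0 + kappa /\
     forall s, 0 <= s <= s0 -> rho s = rho1 s).

Definition strong_solution (M : nat) (rho r : R -> R) : Prop :=
  (forall x, Icc01 x -> cont_within Icc01 r x) /\
  smooth_on Ioc01 r /\
  (forall x, 0 < x < 1 ->
     Lop M r x = INR M * Derive_n rho 2 (dfun M r x) * Derive (dfun M r) x * r x) /\
  r 0 = 0 /\ r 1 = 1.

Definition delayed_lift_off (r : R -> R) : Prop :=
  exists delta, 0 < delta < 1 /\ forall x, 0 <= x <= delta -> r x = 0.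

Definition lifts_off_immediately (r : R -> R) : Prop :=
  forall x, Ioc01 x -> 0 < r x /\ exists l, 0 < l /\ deriv_within Ioc01 r l x.

From Stdlib Require Import Reals Lra Lia Psatz Classical.
From Coquelicot Require Import Coquelicot.
Open Scope R_scope.

(* Write p = r' and d = M r p / R.  Multiplying the equation by r turns it into
     d' (R^2/M + M rho''(d) r^2) = ((M r - R p)^2 + 2 (M - 1) R r p) / R,
   whose right-hand side is nonnegative; as rho'' >= 0 by convexity, d is nondecreasing.
   Since (r^2)' = 2 R d / M, comparing r^2 with R^2 d(R) / M near 0, where both tend
   to 0, gives r^2 <= R^2 d / M, hence d >= 0.  If d stayed above some eps > 0, the
   identity would give d' >= c / R with c > 0 (here M > 1 is used), making d unbounded
   below; so d(0+) = 0.  By monotonicity, either d vanishes at some delta, hence on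
   (0, delta], and then r = 0 there, or d > 0 on (0, 1): then r does not vanish, so r > 0
   by r(1) = 1, and p > 0.  In the latter case r <= R sqrt (d/M) and, using
   (R p)' <= M^2 r / R, also p <= M^2 sqrt (d/M), so r / R and r' tend to 0. *)

Lemma locally_open_interval (a b x : R) : a < x < b -> locally x (fun t => a < t < b).
Proof.
  intros Hx. assert (Hpos : 0 < Rmin (x - a) (b - x)) by (apply Rmin_pos; lra).
  exists (mkposreal _ Hpos). intros t Ht. unfold ball in Ht; simpl in Ht.
  unfold AbsRing_ball, abs, minus, plus, opp in Ht; simpl in Ht.
  pose proof (Rmin_l (x - a) (b - x)). pose proof (Rmin_r (x - a) (b - x)).
  apply Rabs_def2 in Ht. lra.
Qed.

Lemma continuity_pt_of_is_derive (f : R -> R) (x l : R) : is_derive f x l -> continuity_pt f x.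
Proof.
  intros Hd. apply is_derive_Reals in Hd.
  exact (derivable_continuous_pt f x (exist _ l Hd)).
Qed.

Lemma is_derive_of_deriv_within (D : R -> Prop) (f : R -> R) (l x a b : R) :
  a < x < b -> (forall y, a < y < b -> D y) -> deriv_within D f l x -> is_derive f x l.
Proof.
  intros Hx HD Hd. apply is_derive_Reals. intros eps Heps.
  destruct (Hd (eps / 2)) as [d [Hd0 Hd1]]; [lra|].
  assert (Hm : 0 < Rmin d (Rmin (x - a) (b - x))) by (repeat apply Rmin_pos; lra).
  exists (mkposreal _ Hm). intros h Hh0 Hh. simpl in Hh.
  pose proof (Rmin_l d (Rmin (x - a) (b - x))). pose proof (Rmin_r d (Rmin (x - a) (b - x))).
  pose proof (Rmin_l (x - a) (b - x)). pose proof (Rmin_r (x - a) (b - x)).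
  assert (Hy : a < x + h < b) by (apply Rabs_def2 in Hh; lra).
  specialize (Hd1 (x + h) (HD _ Hy)). replace (x + h - x) with h in Hd1 by ring.
  specialize (Hd1 ltac:(lra)).
  replace ((f (x + h) - f x) / h - l) with ((f (x + h) - f x - l * h) / h) by (field; auto).
  unfold Rdiv. rewrite Rabs_mult, Rabs_inv.
  assert (0 < Rabs h) by (apply Rabs_pos_lt; auto).
  apply Rle_lt_trans with (eps / 2 * Rabs h * / Rabs h).
  - apply Rmult_le_compat_r; [left; apply Rinv_0_lt_compat|]; auto.
  - field_simplify; lra.
Qed.

Lemma cont_within_of_deriv_within (D : R -> Prop) (f : R -> R) (l x : R) :
  deriv_within D f l x -> cont_within D f x.
Proof.
  intros Hd eps Heps. destruct (Hd 1) as [d [Hd0 Hd1]]; [lra|].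
  set (c := Rmin d (eps / (Rabs l + 2))).
  assert (Hl : 0 < Rabs l + 2) by (pose proof (Rabs_pos l); lra).
  assert (Hc : 0 < c) by (apply Rmin_pos; [lra|apply Rdiv_lt_0_compat; lra]).
  exists c. split; [exact Hc|]. intros y Dy Hy.
  pose proof (Rmin_l d (eps / (Rabs l + 2))). pose proof (Rmin_r d (eps / (Rabs l + 2))).
  specialize (Hd1 y Dy ltac:(unfold c in *; lra)).
  replace (f y - f x) with ((f y - f x - l * (y - x)) + l * (y - x)) by ring.
  eapply Rle_lt_trans; [apply Rabs_triang|]. rewrite Rabs_mult.
  assert (Rabs (y - x) * (Rabs l + 2) < eps).
  { apply Rlt_le_trans with (eps / (Rabs l + 2) * (Rabs l + 2)).
    - apply Rmult_lt_compat_r; unfold c in *; lra.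
    - right; field; lra. }
  pose proof (Rabs_pos l). pose proof (Rabs_pos (y - x)). nra.
Qed.

Lemma deriv_within_transfer (D D' : R -> Prop) (f g : R -> R) (l x delta : R) :
  0 < delta -> D' x -> (forall y, D' y -> Rabs (y - x) < delta -> D y /\ f y = g y) ->
  deriv_within D g l x -> deriv_within D' f l x.
Proof.
  intros Hdelta Hx Hloc Hd eps Heps. destruct (Hd eps Heps) as [d [Hd0 Hd1]].
  exists (Rmin d delta). split; [now apply Rmin_pos|].
  intros y Hy Hyx. pose proof (Rmin_l d delta). pose proof (Rmin_r d delta).
  destruct (Hloc y Hy ltac:(lra)) as [HDy Hfy].
  destruct (Hloc x Hx ltac:(rewrite Rminus_eq_0, Rabs_R0; lra)) as [_ Hfx].
  rewrite Hfy, Hfx. apply Hd1; [exact HDy|lra].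
Qed.

Lemma cont_within_transfer (D D' : R -> Prop) (f g : R -> R) (x delta : R) :
  0 < delta -> D' x -> (forall y, D' y -> Rabs (y - x) < delta -> D y /\ f y = g y) ->
  cont_within D g x -> cont_within D' f x.
Proof.
  intros Hdelta Hx Hloc Hc eps Heps. destruct (Hc eps Heps) as [d [Hd0 Hd1]].
  exists (Rmin d delta). split; [now apply Rmin_pos|].
  intros y Hy Hyx. pose proof (Rmin_l d delta). pose proof (Rmin_r d delta).
  destruct (Hloc y Hy ltac:(lra)) as [HDy Hfy].
  destruct (Hloc x Hx ltac:(rewrite Rminus_eq_0, Rabs_R0; lra)) as [_ Hfx].
  rewrite Hfy, Hfx. apply Hd1; [exact HDy|lra].
Qed.

Lemma is_derive_MVT (f df : R -> R) (a b : R) : a < b ->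
  (forall x, a <= x <= b -> is_derive f x (df x)) ->
  exists c, a < c < b /\ f b - f a = df c * (b - a).
Proof.
  intros Hab Hd. destruct (MVT_cor2 f df a b Hab) as [c [Heq Hc]].
  - intros c Hc. apply is_derive_Reals. now apply Hd.
  - now exists c.
Qed.

Lemma le_of_derive_nonneg (f df : R -> R) (a b : R) : a <= b ->
  (forall x, a <= x <= b -> is_derive f x (df x)) ->
  (forall x, a <= x <= b -> 0 <= df x) -> f a <= f b.
Proof.
  intros Hab Hd Hpos. destruct (Req_dec a b) as [->|Hne]; [lra|].
  destruct (is_derive_MVT f df a b) as [c [Hc Heq]]; [lra|exact Hd|].
  specialize (Hpos c ltac:(lra)). nra.
Qed.

Lemma nonpos_of_derive_nonpos (f df : R -> R) (x : R) : 0 < x ->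
  (forall s, 0 < s <= x -> is_derive f s (df s)) ->
  (forall s, 0 < s <= x -> df s <= 0) ->
  (forall eta, 0 < eta -> exists e, 0 < e < x /\ f e < eta) -> f x <= 0.
Proof.
  intros Hx Hd Hneg Hsmall. apply Rnot_lt_le. intros Hfx.
  destruct (Hsmall (f x) Hfx) as [e [He Hfe]].
  assert (- f e <= - f x); [|lra].
  apply (le_of_derive_nonneg (fun s => - f s) (fun s => - df s)); [lra| |].
  - intros s Hs. apply (is_derive_opp f). apply Hd. lra.
  - intros s Hs. specialize (Hneg s ltac:(lra)). lra.
Qed.

Lemma unbounded_below_of_derive_ge_inv (f df : R -> R) (a c : R) : 0 < a -> 0 < c ->
  (forall x, 0 < x <= a -> is_derive f x (df x)) ->
  (forall x, 0 < x <= a -> c / x <= df x) ->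
  forall L, exists e, 0 < e < a /\ f e < L.
Proof.
  intros Ha Hc Hd Hge L.
  set (A := f a - c * ln a).
  set (T := Rmax (- ln a) ((A - L) / c) + 1).
  assert (HT1 : - ln a < T) by (unfold T; pose proof (Rmax_l (- ln a) ((A - L) / c)); lra).
  assert (HT2 : (A - L) / c < T) by (unfold T; pose proof (Rmax_r (- ln a) ((A - L) / c)); lra).
  assert (He : 0 < exp (- T) < a).
  { split; [apply exp_pos|]. rewrite <- (exp_ln a) by lra. apply exp_increasing. lra. }
  exists (exp (- T)). split; [exact He|].
  (* f - c ln is nondecreasing, so f (exp (-T)) <= A - c T < L *)
  assert (Hmono : f (exp (- T)) - c * ln (exp (- T)) <= A).
  { apply (le_of_derive_nonneg (fun s => f s - c * ln s) (fun s => df s - c / s)); [lra| |].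
    - intros s Hs. apply (is_derive_minus f (fun s => c * ln s)); [apply Hd; lra|].
      unfold Rdiv. apply is_derive_scal, is_derive_ln. lra.
    - intros s Hs. specialize (Hge s ltac:(lra)). lra. }
  rewrite ln_exp in Hmono.
  assert (HcT : c * ((A - L) / c) < c * T) by (apply Rmult_lt_compat_l; lra).
  replace (c * ((A - L) / c)) with (A - L) in HcT by (field; lra).
  lra.
Qed.

Lemma cont_within_Ioc01_ge_at_1 (f : R -> R) (a c : R) : 0 <= a < 1 ->
  cont_within Ioc01 f 1 -> (forall x, a < x < 1 -> c <= f x) -> c <= f 1.
Proof.
  intros Ha Hc Hge. apply Rnot_lt_le. intros Hlt.
  destruct (Hc (c - f 1) ltac:(lra)) as [d [Hd Hnear]].
  assert (0 < Rmin (1 - a) d) by (apply Rmin_pos; lra).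
  pose proof (Rmin_l (1 - a) d). pose proof (Rmin_r (1 - a) d).
  set (x := 1 - Rmin (1 - a) d / 2).
  specialize (Hnear x ltac:(unfold Ioc01, x; lra) ltac:(apply Rabs_def1; unfold x; lra)).
  apply Rabs_def2 in Hnear. specialize (Hge x ltac:(unfold x; lra)). lra.
Qed.
Lemma convex_second_derivative_nonneg (f f1 f2 : R -> R) : convex_fun f ->
  (forall x, is_derive f x (f1 x)) -> (forall x, is_derive f1 x (f2 x)) ->
  (forall x, continuity_pt f2 x) -> forall x, 0 <= f2 x.
Proof.
  intros Hconv Hf Hf1 Hf2 x0. apply Rnot_lt_le. intros Hneg.
  assert (Hnear : exists eta, 0 < eta /\ forall y, Rabs (y - x0) < eta -> f2 y < 0).
  { destruct (Hf2 x0 (- f2 x0) ltac:(lra)) as [eta [Heta Hc]].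
    exists eta. split; [exact Heta|]. intros y Hy.
    destruct (Req_dec y x0) as [->|Hne]; [exact Hneg|].
    assert (Hd : R_dist (f2 y) (f2 x0) < - f2 x0) by (apply Hc; repeat split; auto).
    unfold R_dist in Hd. apply Rabs_def2 in Hd. lra. }
  destruct Hnear as [eta [Heta Hnear]].
  (* g' (t) = 2 t f2 (xi) < 0 for small t > 0, so g h < g 0 = 2 f x0, against midpoint convexity *)
  set (g := fun t => f (x0 + t) + f (x0 - t)).
  set (dg := fun t => f1 (x0 + t) - f1 (x0 - t)).
  assert (Hg : forall t, is_derive g t (dg t)).
  { intros t. unfold g, dg.
    replace (f1 (x0 + t) - f1 (x0 - t)) with (1 * f1 (x0 + t) + (-1) * f1 (x0 - t)) by ring.
    apply (is_derive_plus (fun t => f (x0 + t)) (fun t => f (x0 - t))).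
    - apply (is_derive_comp f (fun t => x0 + t)); [apply Hf|auto_derive; auto; ring].
    - apply (is_derive_comp f (fun t => x0 - t)); [apply Hf|auto_derive; auto; ring]. }
  assert (Hdg : forall t, 0 < t < eta -> dg t < 0).
  { intros t Ht. destruct (is_derive_MVT f1 f2 (x0 - t) (x0 + t)) as [xi [Hxi Heq]];
      [lra|intros; apply Hf1|].
    unfold dg. rewrite Heq. assert (f2 xi < 0) by (apply Hnear, Rabs_def1; lra). nra. }
  set (h := eta / 2).
  destruct (is_derive_MVT g dg 0 h) as [c [Hc Heq]]; [unfold h; lra|intros; apply Hg|].
  assert (Hgh : g h < g 0).
  { assert (dg c < 0) by (apply Hdg; unfold h in *; lra). unfold h in *. nra. }
  pose proof (Hconv (x0 + h) (x0 - h) (1 / 2) ltac:(lra)) as Hmid.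
  replace (1 / 2 * (x0 + h) + (1 - 1 / 2) * (x0 - h)) with x0 in Hmid by field.
  unfold g in Hgh. rewrite Rplus_0_r, Rminus_0_r in Hgh. lra.
Qed.

Lemma Derive_n_2_on_interval (f f1 f2 : R -> R) (a b x : R) : a < x < b ->
  (forall y, a < y < b -> is_derive f y (f1 y)) ->
  (forall y, a < y < b -> is_derive f1 y (f2 y)) ->
  Derive f x = f1 x /\ Derive_n f 2 x = f2 x.
Proof.
  intros Hx Hf Hf1.
  assert (HD : forall y, a < y < b -> Derive f y = f1 y)
    by (intros y Hy; apply is_derive_unique; auto).
  split; [auto|]. change (Derive (Derive f) x = f2 x).
  apply is_derive_unique. apply (is_derive_ext_loc f1); [|auto].
  apply (filter_imp (fun t => a < t < b)); [intros t Ht; symmetry; auto|].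
  now apply locally_open_interval.
Qed.

Lemma rho_second_derivative (gamma s0 kappa : R) (rho : R -> R) : rho_hyp gamma s0 kappa rho ->
  exists rho2 : R -> R, (forall s, Derive_n rho 2 s = rho2 s) /\ (forall s, 0 <= rho2 s) /\
    forall b, exists K, forall s, Rabs s <= b -> rho2 s <= K.
Proof.
  intros [_ [_ [_ [[G [HG0 HG]] [Hconv _]]]]].
  assert (HGd : forall n x, is_derive (G n) x (G (S n) x)).
  { intros n x.
    apply (is_derive_of_deriv_within (fun _ => True) _ _ x (x - 1) (x + 1)); auto; lra. }
  assert (Hrho : forall x, is_derive rho x (G 1%nat x)).
  { intros x. apply (is_derive_ext (G 0%nat)); [intros; apply HG0; exact I|apply HGd]. }
  assert (Hcont : forall x, continuity_pt (G 2%nat) x).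
  { intros x. apply (continuity_pt_of_is_derive _ _ _ (HGd 2%nat x)). }
  exists (G 2%nat). split; [|split].
  - intros s. apply (Derive_n_2_on_interval rho (G 1%nat) (G 2%nat) (s - 1) (s + 1)); auto; lra.
  - exact (convex_second_derivative_nonneg rho (G 1%nat) (G 2%nat) Hconv Hrho (HGd 1%nat) Hcont).
  - intros b. destruct (Rle_dec (- b) b) as [Hb|Hb].
    + destruct (continuity_ab_maj (G 2%nat) (- b) b Hb) as [smax [Hmax _]]; [intros; apply Hcont|].
      exists (G 2%nat smax). intros s Hs. apply Hmax.
      pose proof (Rle_abs s). pose proof (Rle_abs (- s)). rewrite Rabs_Ropp in *. lra.
    + exists 0. intros s Hs. pose proof (Rabs_pos s). lra.
Qed.

Lemma sq_combination_ge (m a b x : R) : 0 < x ->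
  2 * (m - 1) * (a * b) <= m ^ 2 * (a * a) / x + x * (b * b) - 2 * a * b.
Proof.
  intros Hx.
  assert (E : m ^ 2 * (a * a) / x + x * (b * b) - 2 * a * b - 2 * (m - 1) * (a * b)
              = (m * a - x * b) ^ 2 / x) by (field; lra).
  assert (0 <= (m * a - x * b) ^ 2 / x) by (apply Rdiv_le_0_compat; [apply pow2_ge_0|lra]).
  lra.
Qed.

Lemma sq_combination_nonneg (m a b x : R) : 1 <= m -> 0 < x ->
  0 <= m ^ 2 * (a * a) / x + x * (b * b) - 2 * a * b.
Proof.
  intros Hm Hx. pose proof (sq_combination_ge m a b x Hx).
  destruct (Rle_dec 0 (a * b)); [nra|].
  assert (0 <= m ^ 2 * (a * a) / x) by (apply Rdiv_le_0_compat; [nra|lra]).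
  nra.
Qed.

Section RadialEquation.

Variable m : R.
Variables r p q k : R -> R.

(* [dr] is the paper's [d] with [r' = p]; [dr'] is its derivative, using [p' = q]. *)
Definition dr (x : R) : R := m * r x * p x / x.
Definition dr' (x : R) : R := m * ((p x * p x + r x * q x) * x - r x * p x) / x ^ 2.

Hypothesis r_der : forall x, 0 < x < 1 -> is_derive r x (p x).
Hypothesis p_der : forall x, 0 < x < 1 -> is_derive p x (q x).

Lemma dr_derive (x : R) : 0 < x < 1 -> is_derive dr x (dr' x).
Proof.
  intros Hx. unfold dr, dr'.
  replace (m * ((p x * p x + r x * q x) * x - r x * p x) / x ^ 2)
    with (((m * p x * p x + m * r x * q x) * x - m * r x * p x * 1) / x ^ 2) by (field; lra).
  apply (is_derive_div (fun t => m * r t * p t) (fun t => t)); [|apply (is_derive_id x)|lra].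
  apply (is_derive_mult (fun t => m * r t) p); [apply is_derive_scal; auto|auto|].
  intros; apply Rmult_comm.
Qed.

Hypothesis m_gt1 : 1 < m.
Hypothesis ode : forall x, 0 < x < 1 ->
  m ^ 2 * r x / x - p x - x * q x = m * k x * dr' x * r x.
Hypothesis k_nonneg : forall x, 0 < x < 1 -> 0 <= k x.
Hypothesis k_bounded : forall b, exists K, forall x, 0 < x < 1 -> Rabs (dr x) <= b -> k x <= K.
Hypothesis r_cont0 : cont_within Icc01 r 0.
Hypothesis r_0 : r 0 = 0.

Lemma r_sq_derive (x : R) : 0 < x < 1 -> is_derive (fun s => r s * r s) x (2 * x * dr x / m).
Proof.
  intros Hx. unfold dr.
  replace (2 * x * (m * r x * p x / x) / m) with (p x * r x + r x * p x) by (field; lra).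
  apply (is_derive_mult r r); auto. intros; apply Rmult_comm.
Qed.

Lemma r_sq_small_near0 (x : R) : 0 < x ->
  forall eta, 0 < eta -> exists e, 0 < e < x /\ r e * r e < eta.
Proof.
  intros Hx eta Heta.
  destruct (r_cont0 (Rmin 1 eta)) as [d [Hd Hnear]]; [apply Rmin_pos; lra|].
  set (e := Rmin (Rmin d x) 1 / 2).
  pose proof (Rmin_l (Rmin d x) 1). pose proof (Rmin_r (Rmin d x) 1).
  pose proof (Rmin_l d x). pose proof (Rmin_r d x).
  assert (0 < Rmin (Rmin d x) 1) by (repeat apply Rmin_pos; lra).
  exists e. split; [unfold e in *; lra|].
  specialize (Hnear e ltac:(unfold Icc01, e in *; lra)
                 ltac:(rewrite Rminus_0_r, Rabs_right; unfold e in *; lra)).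
  rewrite r_0, Rminus_0_r in Hnear.
  pose proof (Rmin_l 1 eta). pose proof (Rmin_r 1 eta).
  apply Rabs_def2 in Hnear. nra.
Qed.

Lemma dr'_weighted (x : R) : 0 < x < 1 ->
  dr' x * (x ^ 2 / m + m * k x * (r x * r x))
  = m ^ 2 * (r x * r x) / x + x * (p x * p x) - 2 * r x * p x.
Proof.
  intros Hx.
  transitivity (dr' x * (x ^ 2 / m) + r x * (m * k x * dr' x * r x)); [ring|].
  rewrite <- ode by exact Hx. unfold dr'. field. lra.
Qed.

Lemma dr'_nonneg (x : R) : 0 < x < 1 -> 0 <= dr' x.
Proof.
  intros Hx. pose proof (dr'_weighted x Hx) as E.
  pose proof (sq_combination_nonneg m (r x) (p x) x ltac:(lra) ltac:(lra)).
  assert (0 < x ^ 2 / m) by (apply Rdiv_lt_0_compat; nra).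
  assert (0 <= m * k x * (r x * r x)) by (specialize (k_nonneg x Hx); apply Rmult_le_pos; nra).
  apply Rnot_lt_le. intros Hneg. nra.
Qed.

Lemma dr_nondecreasing (x y : R) : 0 < x -> x <= y -> y < 1 -> dr x <= dr y.
Proof.
  intros Hx Hxy Hy. apply (le_of_derive_nonneg dr dr'); [lra| |].
  - intros t Ht. apply dr_derive. lra.
  - intros t Ht. apply dr'_nonneg. lra.
Qed.

Lemma dr_nonneg (x : R) : 0 < x < 1 -> 0 <= dr x.
Proof.
  intros Hx. apply Rnot_lt_le. intros Hneg.
  assert (Hr : r x * r x <= 0).
  { apply (nonpos_of_derive_nonpos (fun s => r s * r s) (fun s => 2 * s * dr s / m)); [lra| | |].
    - intros s Hs. apply r_sq_derive. lra.
    - intros s Hs. assert (dr s <= dr x) by (apply dr_nondecreasing; lra).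
      assert (0 < 2 * s / m) by (apply Rdiv_lt_0_compat; lra).
      replace (2 * s * dr s / m) with (2 * s / m * dr s) by (field; lra). nra.
    - apply r_sq_small_near0. lra. }
  assert (Hr0 : r x = 0) by nra.
  unfold dr in Hneg. rewrite Hr0 in Hneg.
  replace (m * 0 * p x / x) with 0 in Hneg by (field; lra). lra.
Qed.

Lemma r_sq_le (x : R) : 0 < x < 1 -> r x * r x <= x ^ 2 * dr x / m.
Proof.
  intros Hx. set (D := dr x). assert (HD : 0 <= D) by (apply dr_nonneg; exact Hx).
  enough (r x * r x - x ^ 2 * D / m <= 0) by lra.
  apply (nonpos_of_derive_nonpos (fun s => r s * r s - s ^ 2 * D / m)
           (fun s => 2 * s * dr s / m - 2 * s * D / m)); [lra| | |].
  - intros s Hs. apply (is_derive_minus (fun s => r s * r s) (fun s => s ^ 2 * D / m));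
      [apply r_sq_derive; lra|].
    auto_derive; [exact I|field; lra].
  - intros s Hs. assert (dr s <= D) by (apply dr_nondecreasing; lra).
    assert (0 < 2 * s / m) by (apply Rdiv_lt_0_compat; lra).
    replace (2 * s * dr s / m - 2 * s * D / m) with (2 * s / m * (dr s - D)) by (field; lra). nra.
  - intros eta Heta. destruct (r_sq_small_near0 x ltac:(lra) eta Heta) as [e [He Hsmall]].
    exists e. split; [exact He|].
    assert (0 <= e ^ 2 * D / m) by (apply Rdiv_le_0_compat; nra). lra.
Qed.

Lemma dr'_ge_inv (eps D K x : R) : 0 < eps -> 0 <= K -> 0 < x < 1 ->
  eps <= dr x <= D -> k x <= K ->
  2 * (m - 1) * eps / (m * (1 / m + K * D)) / x <= dr' x.
Proof.
  intros Heps HK Hx HdD Hk. set (B := 1 / m + K * D).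
  assert (HB : 0 < B) by (unfold B; assert (0 < 1 / m) by (apply Rdiv_lt_0_compat; lra); nra).
  assert (Hr2 : r x * r x <= x ^ 2 * D / m).
  { eapply Rle_trans; [apply r_sq_le; exact Hx|].
    apply Rmult_le_compat_r; [left; apply Rinv_0_lt_compat; lra|nra]. }
  assert (HW : x ^ 2 / m + m * k x * (r x * r x) <= x ^ 2 * B).
  { pose proof (k_nonneg x Hx).
    assert (Hkr : m * k x * (r x * r x) <= m * K * (x ^ 2 * D / m)) by (apply Rmult_le_compat; nra).
    replace (m * K * (x ^ 2 * D / m)) with (x ^ 2 * (K * D)) in Hkr by (field; lra).
    unfold B. replace (x ^ 2 * (1 / m + K * D)) with (x ^ 2 / m + x ^ 2 * (K * D)) by (field; lra).
    lra. }
  assert (Hrp : r x * p x = x * dr x / m) by (unfold dr; field; lra).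
  assert (HN : 2 * (m - 1) * (x * eps / m) <= dr' x * (x ^ 2 * B)).
  { pose proof (sq_combination_ge m (r x) (p x) x ltac:(lra)) as Hsq.
    rewrite <- dr'_weighted in Hsq by exact Hx. rewrite Hrp in Hsq.
    assert (2 * (m - 1) * (x * eps / m) <= 2 * (m - 1) * (x * dr x / m)).
    { apply Rmult_le_compat_l; [lra|].
      apply Rmult_le_compat_r; [left; apply Rinv_0_lt_compat|]; nra. }
    pose proof (dr'_nonneg x Hx). nra. }
  apply (Rmult_le_reg_r (x ^ 2 * B)); [apply Rmult_lt_0_compat; [apply pow_lt|]; lra|].
  replace (2 * (m - 1) * eps / (m * B) / x * (x ^ 2 * B)) with (2 * (m - 1) * (x * eps / m))
    by (field; repeat split; lra).
  exact HN.
Qed.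

Lemma dr_arbitrarily_small (eps : R) : 0 < eps -> exists x0, 0 < x0 < 1 /\ dr x0 < eps.
Proof.
  intros Heps. apply NNPP. intros Hnot.
  assert (Hge : forall x, 0 < x < 1 -> eps <= dr x).
  { intros x Hx. apply Rnot_lt_le. intros Hlt. apply Hnot. now exists x. }
  set (D := dr (1 / 2)).
  destruct (k_bounded D) as [K HK].
  set (K' := Rmax K 0).
  assert (HK' : K <= K' /\ 0 <= K') by (split; [apply Rmax_l|apply Rmax_r]).
  assert (HD : eps <= D) by (apply Hge; lra).
  set (c := 2 * (m - 1) * eps / (m * (1 / m + K' * D))).
  assert (Hc : 0 < c).
  { assert (0 < 1 / m) by (apply Rdiv_lt_0_compat; lra).
    assert (0 <= K' * D) by (apply Rmult_le_pos; lra).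
    apply Rdiv_lt_0_compat; [nra|apply Rmult_lt_0_compat; lra]. }
  (* if d stayed above eps, then d' >= c / x and d would be unbounded below near 0 *)
  destruct (unbounded_below_of_derive_ge_inv dr dr' (1 / 2) c ltac:(lra) Hc) with (L := eps)
    as [e [He Hlt]].
  - intros x Hx. apply dr_derive. lra.
  - intros x Hx.
    assert (Hdx : eps <= dr x <= D) by (split; [apply Hge|apply dr_nondecreasing]; lra).
    apply (dr'_ge_inv eps D K' x); try lra.
    assert (k x <= K); [|lra].
    apply HK; [lra|]. rewrite Rabs_right; lra.
  - specialize (Hge e ltac:(lra)). lra.
Qed.

Lemma dr_small_near0 (eps : R) : 0 < eps ->
  exists x0, 0 < x0 < 1 /\ forall x, 0 < x <= x0 -> 0 <= dr x < eps.
Proof.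
  intros Heps. destruct (dr_arbitrarily_small eps Heps) as [x0 [Hx0 Hd]].
  exists x0. split; [exact Hx0|]. intros x Hx. split; [apply dr_nonneg; lra|].
  assert (dr x <= dr x0) by (apply dr_nondecreasing; lra). lra.
Qed.

Lemma dr_tends_to_0 : filterlim dr (at_right 0) (locally 0).
Proof.
  apply filterlim_locally. intros eps.
  destruct (dr_small_near0 eps (cond_pos eps)) as [x0 [Hx0 Hd]].
  exists (mkposreal x0 (proj1 Hx0)). intros y Hy Hy0.
  unfold ball in Hy |- *; simpl in Hy |- *. unfold AbsRing_ball, abs, minus, plus, opp in Hy |- *.
  simpl in Hy |- *. rewrite Ropp_0, Rplus_0_r in Hy |- *.
  rewrite Rabs_right in Hy by lra. specialize (Hd y ltac:(lra)).
  rewrite Rabs_right; lra.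
Qed.

Lemma r_vanish_of_dr_zero (x1 : R) : 0 < x1 < 1 -> dr x1 = 0 ->
  forall x, 0 <= x <= x1 -> r x = 0.
Proof.
  intros Hx1 Hd x Hx. destruct (Req_dec x 0) as [->|Hx0]; [exact r_0|].
  assert (Hdx : dr x = 0).
  { pose proof (dr_nonneg x ltac:(lra)).
    assert (dr x <= dr x1) by (apply dr_nondecreasing; lra). lra. }
  pose proof (r_sq_le x ltac:(lra)) as Hr. rewrite Hdx in Hr.
  replace (x ^ 2 * 0 / m) with 0 in Hr by (field; lra). nra.
Qed.

Lemma r_le_sqrt_dr (x : R) : 0 < x < 1 -> r x <= x * sqrt (dr x / m).
Proof.
  intros Hx. pose proof (r_sq_le x Hx) as Hr.
  assert (HS : 0 <= dr x / m) by (apply Rdiv_le_0_compat; [apply dr_nonneg; exact Hx|lra]).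
  pose proof (sqrt_pos (dr x / m)). pose proof (sqrt_sqrt (dr x / m) HS) as Hsq.
  replace (x ^ 2 * dr x / m) with ((x * sqrt (dr x / m)) * (x * sqrt (dr x / m))) in Hr
    by (replace (x * sqrt (dr x / m) * (x * sqrt (dr x / m)))
          with (x * x * (sqrt (dr x / m) * sqrt (dr x / m))) by ring; rewrite Hsq; field; lra).
  assert (0 <= x * sqrt (dr x / m)) by nra. nra.
Qed.

Section PositiveSolution.

Hypothesis r_pos : forall x, 0 < x < 1 -> 0 < r x.

Lemma p_le_sqrt_dr (x : R) : 0 < x < 1 -> p x <= m ^ 2 * sqrt (dr x / m).
Proof.
  intros Hx. set (S := sqrt (dr x / m)).
  assert (HS : 0 <= S) by apply sqrt_pos.
  assert (Hrs : forall s, 0 < s <= x -> r s <= s * S).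
  { intros s Hs. eapply Rle_trans; [apply r_le_sqrt_dr; lra|].
    apply Rmult_le_compat_l; [lra|]. apply sqrt_le_1_alt.
    apply Rmult_le_compat_r; [left; apply Rinv_0_lt_compat; lra|]. apply dr_nondecreasing; lra. }
  (* by the equation, (s p)' = p + s q = m^2 r / s - m k d' r *)
  assert (Hsp_der : forall s, 0 < s <= x -> p s + s * q s <= m ^ 2 * S).
  { intros s Hs. pose proof (ode s ltac:(lra)) as E.
    assert (0 <= m * k s * dr' s * r s).
    { pose proof (k_nonneg s ltac:(lra)). pose proof (dr'_nonneg s ltac:(lra)).
      pose proof (r_pos s ltac:(lra)).
      apply Rmult_le_pos; [apply Rmult_le_pos; [apply Rmult_le_pos|]|]; lra. }
    assert (m ^ 2 * r s / s <= m ^ 2 * S).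
    { apply (Rmult_le_reg_r s); [lra|].
      replace (m ^ 2 * r s / s * s) with (m ^ 2 * r s) by (field; lra).
      specialize (Hrs s Hs). assert (0 <= m ^ 2) by nra. nra. }
    lra. }
  assert (Hsp_small : forall eta, 0 < eta -> exists e, 0 < e < x /\ e * p e < eta).
  { intros eta Heta. apply NNPP. intros Hnot.
    (* otherwise r' = p >= eta / s near 0, and r > 0 could not stay bounded below *)
    destruct (unbounded_below_of_derive_ge_inv r p (x / 2) eta ltac:(lra) Heta) with (L := 0)
      as [e [He Hre]].
    - intros s Hs. apply r_der. lra.
    - intros s Hs. apply (Rmult_le_reg_r s); [lra|].
      replace (eta / s * s) with eta by (field; lra). rewrite Rmult_comm.
      apply Rnot_lt_le. intros Hlt. apply Hnot. exists s. split; [lra|exact Hlt].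
    - pose proof (r_pos e ltac:(lra)). lra. }
  enough (x * p x - m ^ 2 * S * x <= 0) by nra.
  apply (nonpos_of_derive_nonpos (fun s => s * p s - m ^ 2 * S * s)
           (fun s => p s + s * q s - m ^ 2 * S)); [lra| | |].
  - intros s Hs.
    replace (p s + s * q s - m ^ 2 * S) with (1 * p s + s * q s - m ^ 2 * S * 1) by ring.
    apply (is_derive_minus (fun s => s * p s) (fun s => m ^ 2 * S * s)).
    + apply (is_derive_mult (fun s => s) p);
        [apply (is_derive_id s)|apply p_der; lra|intros; apply Rmult_comm].
    + apply is_derive_scal, (is_derive_id s).
  - intros s Hs. specialize (Hsp_der s Hs). lra.
  - intros eta Heta. destruct (Hsp_small eta Heta) as [e [He Hlt]].
    exists e. split; [exact He|].
    assert (0 <= m ^ 2 * S * e) by (apply Rmult_le_pos; [apply Rmult_le_pos; nra|lra]). lra.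
Qed.

Lemma r_p_flat_at_0 (eps : R) : 0 < eps ->
  exists dl, 0 < dl /\ forall y, 0 < y < dl -> Rabs (p y) < eps /\ Rabs (r y) <= eps * y.
Proof.
  intros Heps. set (t := eps / m ^ 2).
  assert (Hm2 : 1 < m ^ 2) by nra.
  assert (Ht : 0 < t <= eps).
  { unfold t. split; [apply Rdiv_lt_0_compat; lra|].
    apply (Rmult_le_reg_r (m ^ 2)); [lra|].
    replace (eps / m ^ 2 * m ^ 2) with eps by (field; lra). nra. }
  destruct (dr_small_near0 (m * (t * t))) as [x0 [Hx0 Hd]]; [apply Rmult_lt_0_compat; nra|].
  exists x0. split; [lra|]. intros y Hy. destruct (Hd y ltac:(lra)) as [Hd0 Hd1].
  assert (HS : sqrt (dr y / m) < t).
  { rewrite <- (sqrt_Rsqr t) by lra. apply sqrt_lt_1_alt. split; [apply Rdiv_le_0_compat; lra|].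
    unfold Rsqr. apply (Rmult_lt_reg_r m); [lra|].
    replace (dr y / m * m) with (dr y) by (field; lra). lra. }
  pose proof (sqrt_pos (dr y / m)) as HS0.
  pose proof (r_pos y ltac:(lra)) as Hr.
  assert (Hp0 : 0 <= p y).
  { unfold dr, Rdiv in Hd0. assert (0 < / y) by (apply Rinv_0_lt_compat; lra).
    apply Rnot_lt_le. intros Hp.
    assert (m * r y * p y < 0) by (assert (0 < m * r y) by nra; nra). nra. }
  pose proof (p_le_sqrt_dr y ltac:(lra)) as Hp. pose proof (r_le_sqrt_dr y ltac:(lra)) as Hry.
  rewrite !Rabs_right by lra. split.
  - assert (Hlt : m ^ 2 * sqrt (dr y / m) < m ^ 2 * t) by (apply Rmult_lt_compat_l; lra).
    unfold t in Hlt. replace (m ^ 2 * (eps / m ^ 2)) with eps in Hlt by (field; lra). lra.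
  - nra.
Qed.

End PositiveSolution.

Hypothesis r_cont1 : cont_within Icc01 r 1.
Hypothesis r_1 : r 1 = 1.
Hypothesis p_cont1 : cont_within Ioc01 p 1.

Lemma r_near1 : exists a, 0 < a < 1 /\ forall x, a < x <= 1 -> 1 / 2 < r x < 2.
Proof.
  destruct (r_cont1 (1 / 2)) as [d [Hd Hnear]]; [lra|].
  exists (Rmax (1 / 2) (1 - d)).
  pose proof (Rmax_l (1 / 2) (1 - d)). pose proof (Rmax_r (1 / 2) (1 - d)).
  split; [split; [lra|apply Rmax_lub_lt; lra]|]. intros x Hx.
  specialize (Hnear x ltac:(unfold Icc01; lra) ltac:(apply Rabs_def1; lra)).
  rewrite r_1 in Hnear. apply Rabs_def2 in Hnear. lra.
Qed.

Section LiftOff.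

Hypothesis dr_pos : forall x, 0 < x < 1 -> 0 < dr x.

Lemma r_p_pos (x : R) : 0 < x < 1 -> 0 < r x /\ 0 < p x.
Proof.
  intros Hx.
  assert (Hnz : forall y, 0 < y < 1 -> r y <> 0).
  { intros y Hy Hz. pose proof (dr_pos y Hy) as Hd. unfold dr in Hd. rewrite Hz in Hd.
    replace (m * 0 * p y / y) with 0 in Hd by (field; lra). lra. }
  (* r cannot change sign on (0, 1) and is positive near 1 *)
  assert (Hr : 0 < r x).
  { destruct (Rtotal_order (r x) 0) as [Hneg|[Hz|Hpos]]; [|exfalso; exact (Hnz x Hx Hz)|exact Hpos].
    destruct r_near1 as [a [Ha Hnear]].
    set (y := (Rmax a x + 1) / 2).
    pose proof (Rmax_l a x). pose proof (Rmax_r a x).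
    pose proof (Rmax_lub_lt a x 1 ltac:(lra) ltac:(lra)).
    destruct (Ranalysis5.IVT_interv r x y) as [z [Hz Hz0]].
    - intros t Ht. apply (continuity_pt_of_is_derive r t (p t)), r_der. unfold y in *; lra.
    - unfold y; lra.
    - exact Hneg.
    - specialize (Hnear y ltac:(unfold y; lra)). lra.
    - exfalso. apply (Hnz z); [unfold y in *; lra|exact Hz0]. }
  split; [exact Hr|].
  pose proof (dr_pos x Hx) as Hd. unfold dr, Rdiv in Hd.
  assert (0 < / x) by (apply Rinv_0_lt_compat; lra).
  assert (0 < m * r x) by nra.
  apply Rnot_le_lt. intros Hp.
  assert (m * r x * p x <= 0) by nra. nra.
Qed.

Lemma p_1_pos : 0 < p 1.
Proof.
  destruct r_near1 as [a [Ha Hnear]].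
  set (c0 := dr (1 / 2)). assert (Hc0 : 0 < c0) by (apply dr_pos; lra).
  pose proof (Rmax_l a (1 / 2)). pose proof (Rmax_r a (1 / 2)).
  assert (Hlow : c0 / (4 * m) <= p 1).
  { apply (cont_within_Ioc01_ge_at_1 p (Rmax a (1 / 2)));
      [split; [lra|apply Rmax_lub_lt; lra]|exact p_cont1|].
    intros x Hx. destruct (Hnear x ltac:(lra)) as [Hr1 Hr2].
    destruct (r_p_pos x ltac:(lra)) as [_ Hp].
    assert (Hd : c0 <= dr x) by (apply dr_nondecreasing; lra).
    assert (Hid : p x * (m * r x) = x * dr x) by (unfold dr; field; lra).
    assert (c0 / 2 <= p x * (m * r x)) by nra.
    assert (p x * (m * r x) < p x * (2 * m)) by (apply Rmult_lt_compat_l; nra).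
    apply (Rmult_le_reg_r (4 * m)); [lra|].
    replace (c0 / (4 * m) * (4 * m)) with c0 by (field; lra). nra. }
  assert (0 < c0 / (4 * m)) by (apply Rdiv_lt_0_compat; lra). lra.
Qed.

End LiftOff.

Lemma radial_classification :
  filterlim dr (at_right 0) (locally 0) /\
  ((exists x1, 0 < x1 < 1 /\ forall x, 0 <= x <= x1 -> r x = 0) \/
   ((forall x, 0 < x < 1 -> 0 < r x /\ 0 < p x) /\ 0 < p 1 /\
    forall eps, 0 < eps -> exists dl, 0 < dl /\
      forall y, 0 < y < dl -> Rabs (p y) < eps /\ Rabs (r y) <= eps * y)).
Proof.
  split; [exact dr_tends_to_0|].
  destruct (classic (exists x1, 0 < x1 < 1 /\ dr x1 = 0)) as [[x1 [Hx1 Hz]]|Hnz].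
  - left. exists x1. split; [exact Hx1|]. exact (r_vanish_of_dr_zero x1 Hx1 Hz).
  - right. assert (Hpos : forall x, 0 < x < 1 -> 0 < dr x).
    { intros x Hx. destruct (dr_nonneg x Hx) as [|Hz]; [assumption|].
      exfalso. apply Hnz. exists x. auto. }
    split; [|split].
    + exact (r_p_pos Hpos).
    + exact (p_1_pos Hpos).
    + apply r_p_flat_at_0. intros x Hx. apply (r_p_pos Hpos x Hx).
Qed.

End RadialEquation.

Lemma dfun_Lop_on_interior (M : nat) (r p q : R -> R) (x : R) : 0 < x < 1 ->
  (forall y, 0 < y < 1 -> is_derive r y (p y)) -> (forall y, 0 < y < 1 -> is_derive p y (q y)) ->
  dfun M r x = dr (INR M) r p x /\ Derive (dfun M r) x = dr' (INR M) r p q x /\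
  Lop M r x = INR M ^ 2 * r x / x - p x - x * q x.
Proof.
  intros Hx Hr Hp.
  assert (HD : forall y, 0 < y < 1 -> Derive r y = p y /\ Derive_n r 2 y = q y)
    by (intros y Hy; exact (Derive_n_2_on_interval r p q 0 1 y Hy Hr Hp)).
  assert (Hd : forall y, 0 < y < 1 -> dfun M r y = dr (INR M) r p y)
    by (intros y Hy; unfold dfun, dr; now rewrite (proj1 (HD y Hy))).
  split; [|split].
  - exact (Hd x Hx).
  - apply is_derive_unique. apply (is_derive_ext_loc (dr (INR M) r p)).
    + apply (filter_imp (fun t => 0 < t < 1)); [intros t Ht; symmetry; auto|].
      now apply locally_open_interval.
    + exact (dr_derive (INR M) r p q Hr Hp x Hx).
  - unfold Lop. destruct (HD x Hx) as [-> ->]. reflexivity.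
Qed.

Lemma smooth_on_Ioc01_is_derive (r : R -> R) (F : nat -> R -> R) :
  (forall x, Ioc01 x -> F 0%nat x = r x) ->
  (forall n x, Ioc01 x -> deriv_within Ioc01 (F n) (F (S n) x) x) ->
  (forall n x, 0 < x < 1 -> is_derive (F n) x (F (S n) x)) /\
  (forall x, 0 < x < 1 -> is_derive r x (F 1%nat x)).
Proof.
  intros HF0 HF.
  assert (HFd : forall n x, 0 < x < 1 -> is_derive (F n) x (F (S n) x)).
  { intros n x Hx. apply (is_derive_of_deriv_within Ioc01 _ _ x 0 1 Hx).
    - intros y Hy. unfold Ioc01. lra.
    - apply HF. unfold Ioc01. lra. }
  split; [exact HFd|]. intros x Hx. apply (is_derive_ext_loc (F 0%nat)); [|now apply HFd].
  apply (filter_imp (fun t => 0 < t < 1)); [intros t Ht; apply HF0; unfold Ioc01; lra|].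
  now apply locally_open_interval.
Qed.

Definition extend_by_zero (f : R -> R) (x : R) : R := if Rle_dec x 0 then 0 else f x.

Lemma extend_by_zero_pos (f : R -> R) (x : R) : 0 < x -> extend_by_zero f x = f x.
Proof. intros Hx. unfold extend_by_zero. destruct (Rle_dec x 0); [lra|reflexivity]. Qed.

Lemma extend_by_zero_nonpos (f : R -> R) (x : R) : x <= 0 -> extend_by_zero f x = 0.
Proof. intros Hx. unfold extend_by_zero. destruct (Rle_dec x 0); [reflexivity|lra]. Qed.

Lemma deriv_within_Icc01_at_0 (f : R -> R) : f 0 = 0 ->
  (forall eps, 0 < eps -> exists dl, 0 < dl /\ forall y, 0 < y < dl -> Rabs (f y) <= eps * y) ->
  deriv_within Icc01 f 0 0.
Proof.
  intros Hf0 Hflat eps Heps. destruct (Hflat eps Heps) as [dl [Hdl Hsmall]].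
  exists dl. split; [exact Hdl|]. intros y Hy Hyd.
  rewrite Hf0, !Rminus_0_r, Rmult_0_l, Rminus_0_r. unfold Icc01 in Hy.
  destruct (Req_dec y 0) as [->|Hy0].
  - rewrite Hf0, Rabs_R0. lra.
  - rewrite Rminus_0_r in Hyd. rewrite (Rabs_right y) in Hyd |- * by lra. apply Hsmall. lra.
Qed.

Lemma cont_within_Icc01_at_0 (f : R -> R) : f 0 = 0 ->
  (forall eps, 0 < eps -> exists dl, 0 < dl /\ forall y, 0 < y < dl -> Rabs (f y) < eps) ->
  cont_within Icc01 f 0.
Proof.
  intros Hf0 Hsmall eps Heps. destruct (Hsmall eps Heps) as [dl [Hdl Hs]].
  exists dl. split; [exact Hdl|]. intros y Hy Hyd. rewrite Hf0, Rminus_0_r. unfold Icc01 in Hy.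
  destruct (Req_dec y 0) as [->|Hy0].
  - rewrite Hf0, Rabs_R0. exact Heps.
  - rewrite Rminus_0_r, Rabs_right in Hyd by lra. apply Hs. lra.
Qed.

Lemma Icc01_agree_near_pos (f g : R -> R) (x : R) : Ioc01 x -> (forall y, Ioc01 y -> f y = g y) ->
  forall y, Icc01 y -> Rabs (y - x) < x -> Ioc01 y /\ f y = g y.
Proof.
  intros Hx Hfg y Hy Hyx. apply Rabs_def2 in Hyx.
  assert (Ioc01 y) by (unfold Ioc01, Icc01 in *; lra). auto.
Qed.

Lemma smooth_on_Icc01_of_vanishing (r : R -> R) (F : nat -> R -> R) (dl : R) : 0 < dl < 1 ->
  (forall x, 0 <= x <= dl -> r x = 0) ->
  (forall x, Ioc01 x -> F 0%nat x = r x) ->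
  (forall n x, Ioc01 x -> deriv_within Ioc01 (F n) (F (S n) x) x) -> smooth_on Icc01 r.
Proof.
  intros Hdl Hz HF0 HF. destruct (smooth_on_Ioc01_is_derive r F HF0 HF) as [HFd _].
  assert (Hvanish : forall n x, 0 < x < dl -> F n x = 0).
  { induction n as [|n IH]; intros x Hx.
    - rewrite HF0 by (unfold Ioc01; lra). apply Hz. lra.
    - rewrite <- (is_derive_unique _ _ _ (HFd n x ltac:(lra))).
      apply is_derive_unique.
      apply (is_derive_ext_loc (fun _ => 0)); [|apply (is_derive_const 0 x)].
      apply (filter_imp (fun t => 0 < t < dl)); [intros t Ht; symmetry; auto|].
      now apply locally_open_interval. }
  exists (fun n => extend_by_zero (F n)). split.
  - intros x [Hx0 Hx1]. destruct (Rle_lt_dec x 0) as [Hx|Hx].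
    + rewrite extend_by_zero_nonpos by exact Hx. symmetry. apply Hz. lra.
    + rewrite extend_by_zero_pos by exact Hx. apply HF0. unfold Ioc01. lra.
  - intros n x [Hx0 Hx1]. destruct (Rle_lt_dec x 0) as [Hx|Hx].
    + replace x with 0 by lra. rewrite extend_by_zero_nonpos by lra.
      apply deriv_within_Icc01_at_0; [apply extend_by_zero_nonpos; lra|].
      intros eps Heps. exists dl. split; [lra|]. intros y Hy.
      rewrite extend_by_zero_pos, Hvanish, Rabs_R0 by lra. nra.
    + rewrite extend_by_zero_pos by exact Hx.
      apply (deriv_within_transfer Ioc01 Icc01 _ (F n) _ x x Hx ltac:(unfold Icc01; lra)).
      * apply Icc01_agree_near_pos; [unfold Ioc01; lra|]. intros y Hy. apply extend_by_zero_pos, Hy.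
      * apply HF. unfold Ioc01. lra.
Qed.

Lemma C1_on_Icc01_of_flat (r : R -> R) (F : nat -> R -> R) :
  (forall x, Ioc01 x -> F 0%nat x = r x) ->
  (forall n x, Ioc01 x -> deriv_within Ioc01 (F n) (F (S n) x) x) -> r 0 = 0 ->
  (forall eps, 0 < eps -> exists dl, 0 < dl /\
     forall y, 0 < y < dl -> Rabs (F 1%nat y) < eps /\ Rabs (r y) <= eps * y) ->
  C1_on_with Icc01 r (extend_by_zero (F 1%nat)).
Proof.
  intros HF0 HF Hr0 Hflat. split; intros x [Hx0 Hx1]; destruct (Rle_lt_dec x 0) as [Hx|Hx].
  - replace x with 0 by lra. rewrite extend_by_zero_nonpos by lra.
    apply deriv_within_Icc01_at_0; [exact Hr0|].
    intros eps Heps. destruct (Hflat eps Heps) as [dl [Hdl Hs]].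
    exists dl. split; [exact Hdl|]. intros y Hy. apply Hs, Hy.
  - rewrite extend_by_zero_pos by exact Hx.
    apply (deriv_within_transfer Ioc01 Icc01 _ (F 0%nat) _ x x Hx ltac:(unfold Icc01; lra)).
    + apply Icc01_agree_near_pos; [unfold Ioc01; lra|]. intros y Hy. symmetry. apply HF0, Hy.
    + apply HF. unfold Ioc01. lra.
  - replace x with 0 by lra.
    apply cont_within_Icc01_at_0; [apply extend_by_zero_nonpos; lra|].
    intros eps Heps. destruct (Hflat eps Heps) as [dl [Hdl Hs]].
    exists dl. split; [exact Hdl|]. intros y Hy.
    rewrite extend_by_zero_pos by lra. apply Hs, Hy.
  - apply (cont_within_transfer Ioc01 Icc01 _ (F 1%nat) x x Hx ltac:(unfold Icc01; lra)).
    + apply Icc01_agree_near_pos; [unfold Ioc01; lra|]. intros y Hy. apply extend_by_zero_pos, Hy.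
    + apply (cont_within_of_deriv_within _ _ (F 2%nat x)). apply HF. unfold Ioc01. lra.
Qed.

Lemma lifts_off_immediately_of_pos (r : R -> R) (F : nat -> R -> R) :
  (forall x, Ioc01 x -> F 0%nat x = r x) ->
  (forall n x, Ioc01 x -> deriv_within Ioc01 (F n) (F (S n) x) x) -> r 1 = 1 ->
  (forall x, 0 < x < 1 -> 0 < r x /\ 0 < F 1%nat x) -> 0 < F 1%nat 1 ->
  lifts_off_immediately r.
Proof.
  intros HF0 HF Hr1 Hpos Hp1 x Hx. split.
  - destruct (Req_dec x 1) as [->|Hx1]; [lra|]. apply Hpos. unfold Ioc01 in Hx. lra.
  - exists (F 1%nat x). split.
    + destruct (Req_dec x 1) as [->|Hx1]; [exact Hp1|]. apply Hpos. unfold Ioc01 in Hx. lra.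
    + apply (deriv_within_transfer Ioc01 Ioc01 _ (F 0%nat) _ x 1 Rlt_0_1 Hx); [|apply HF, Hx].
      intros y Hy _. split; [exact Hy|]. symmetry. apply HF0, Hy.
Qed.

Lemma at_right_0_unit_interval : at_right 0 (fun x => 0 < x < 1).
Proof.
  exists (mkposreal 1 Rlt_0_1). intros y Hy Hy0.
  unfold ball in Hy; simpl in Hy. unfold AbsRing_ball, abs, minus, plus, opp in Hy; simpl in Hy.
  rewrite Ropp_0, Rplus_0_r, Rabs_right in Hy by lra. lra.
Qed.

Lemma strong_solution_classification (gamma s0 kappa : R) (rho : R -> R) (M : nat) (r : R -> R)
  (F : nat -> R -> R) :
  rho_hyp gamma s0 kappa rho -> (2 <= M)%nat ->
  (forall x, Icc01 x -> cont_within Icc01 r x) ->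
  (forall x, Ioc01 x -> F 0%nat x = r x) ->
  (forall n x, Ioc01 x -> deriv_within Ioc01 (F n) (F (S n) x) x) ->
  (forall x, 0 < x < 1 ->
     Lop M r x = INR M * Derive_n rho 2 (dfun M r x) * Derive (dfun M r) x * r x) ->
  r 0 = 0 -> r 1 = 1 ->
  filterlim (dfun M r) (at_right 0) (locally 0) /\
  (delayed_lift_off r \/
   ((forall x, 0 < x < 1 -> 0 < r x /\ 0 < F 1%nat x) /\ 0 < F 1%nat 1 /\
    forall eps, 0 < eps -> exists dl, 0 < dl /\
      forall y, 0 < y < dl -> Rabs (F 1%nat y) < eps /\ Rabs (r y) <= eps * y)).
Proof.
  intros Hrho HM Hr_cont HF0 HF HL Hr0 Hr1.
  destruct (rho_second_derivative _ _ _ _ Hrho) as [rho2 [Hrho2 [Hrho2_nonneg Hrho2_bdd]]].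
  destruct (smooth_on_Ioc01_is_derive r F HF0 HF) as [HFd Hrd].
  set (p := F 1%nat). set (q := F 2%nat).
  pose proof (fun x Hx => dfun_Lop_on_interior M r p q x Hx Hrd (HFd 1%nat)) as Hdfun.
  set (m := INR M) in *.
  assert (Hm : 1 < m) by (apply lt_1_INR; lia).
  set (k := fun x => rho2 (dr m r p x)).
  assert (Hode : forall x, 0 < x < 1 ->
            m ^ 2 * r x / x - p x - x * q x = m * k x * dr' m r p q x * r x).
  { intros x Hx. destruct (Hdfun x Hx) as [Hd [HDd HLx]].
    rewrite <- HLx, HL by exact Hx. unfold k. now rewrite Hrho2, HDd, Hd. }
  assert (Hk_bdd : forall b, exists K, forall x, 0 < x < 1 -> Rabs (dr m r p x) <= b -> k x <= K).
  { intros b. destruct (Hrho2_bdd b) as [K HK]. exists K. intros x _ Hx. apply HK, Hx. }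
  destruct (radial_classification m r p q k Hrd (HFd 1%nat) Hm Hode (fun x _ => Hrho2_nonneg _)
              Hk_bdd (Hr_cont 0 ltac:(unfold Icc01; lra)) Hr0 (Hr_cont 1 ltac:(unfold Icc01; lra)) Hr1
              (cont_within_of_deriv_within _ _ _ _ (HF 1%nat 1 ltac:(unfold Ioc01; lra))))
    as [Hlim Hcases].
  split; [|exact Hcases].
  apply (filterlim_ext_loc (dr m r p)); [|exact Hlim].
  apply (filter_imp (fun x => 0 < x < 1)); [intros x Hx; symmetry; apply Hdfun, Hx|].
  exact at_right_0_unit_interval.
Qed.

Theorem lemma2p6 (gamma s0 kappa : R) (rho : R -> R) (M : nat) (r : R -> R) :
  rho_hyp gamma s0 kappa rho ->
  (2 <= M)%nat ->
  strong_solution M rho r ->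
  filterlim (dfun M r) (at_right 0) (locally 0) /\
  ((delayed_lift_off r \/ lifts_off_immediately r) /\
   ~ (delayed_lift_off r /\ lifts_off_immediately r)) /\
  (delayed_lift_off r -> smooth_on Icc01 r) /\
  (lifts_off_immediately r ->
     exists r' : R -> R, C1_on_with Icc01 r r' /\ r' 0 = 0).
Proof.
  intros Hrho HM [Hr_cont [[F [HF0 HF]] [HL [Hr0 Hr1]]]].
  assert (Hexcl : ~ (delayed_lift_off r /\ lifts_off_immediately r)).
  { intros [[dl [Hdl Hz]] Hi]. destruct (Hi dl ltac:(unfold Ioc01; lra)) as [Hr _].
    rewrite Hz in Hr by lra. lra. }
  assert (Hsmooth : delayed_lift_off r -> smooth_on Icc01 r).
  { intros [dl [Hdl Hz]]. exact (smooth_on_Icc01_of_vanishing r F dl Hdl Hz HF0 HF). }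
  destruct (strong_solution_classification gamma s0 kappa rho M r F
              Hrho HM Hr_cont HF0 HF HL Hr0 Hr1)
    as [Hlim [Hdelayed | [Hpos [Hp1 Hflat]]]].
  - split; [exact Hlim|].
    split; [split; [left; exact Hdelayed|exact Hexcl]|split; [exact Hsmooth|]].
    intros Hi. exfalso. exact (Hexcl (conj Hdelayed Hi)).
  - pose proof (lifts_off_immediately_of_pos r F HF0 HF Hr1 Hpos Hp1) as Hi.
    split; [exact Hlim|].
    split; [split; [right; exact Hi|exact Hexcl]|split; [exact Hsmooth|]].
    intros _. exists (extend_by_zero (F 1%nat)). split.
    + exact (C1_on_Icc01_of_flat r F HF0 HF Hr0 Hflat).
    + apply extend_by_zero_nonpos. lra.
Qed.
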